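(* Let $M=\langle W,\leq,R,V\rangle$ be a brIML1-model, let $\gamma$ be a formula such that $w\nVdash\gamma$ for some $w\in W$, let $\Sigma$ be the set of all subformulas of $\gamma$, and let $M_\Sigma=\langle W_\Sigma,\leq_\Sigma,R_\Sigma,V_\Sigma\rangle$ be the filtered model. Then for every $w\in W$ and every $\alpha\in\Sigma$: $w\Vdash_M\alpha$ iff $[w]\Vdash_{M_\Sigma}\alpha$.
   Context: Formulas are built from a denumerable set $PV$ of propositional variables and $\bot$ using $\land,\lor,\rightarrow$ and unary $\Delta$. A brIML1-model $\langle W,\leq,R,V\rangle$: $W$ non-empty, $\leq$ a partial order, $R$ a binary relation with ($w\leq v\Rightarrow wRv$) and ($w\leq v$, $vRu$ $\Rightarrow wRu$), $V:PV\to P(W)$ upward closed under $\leq$. Forcing: atoms via $V$; $\bot$ never; $\land,\lor$ pointwise; $w\Vdash\varphi\rightarrow\psi$ iff every $v\geq w$ has $v\nVdash\varphi$ or $v\Vdash\psi$; $w\Vdash\Delta\varphi$ iff every $v$ with $wRv$ has $v\Vdash\varphi$. Filtration: $w\sim v$ iff $w,v$ force the same formulas of $\Sigma$; $[w]$ the class of $w$; $W_\Sigma=\{[w]:w\in W\}$; $[w]\leq_\Sigma[v]$ iff every $\alpha\in\Sigma$ forced at $w$ is forced at $v$; $[w]R_\Sigma[v]$ iff for every $\Delta\beta\in\Sigma$, $w\Vdash\Delta\beta$ implies $v\Vdash\beta$; $V_\Sigma(q)=\{[w]:w\in V(q)\}$ if $q\in\Sigma$ and $V_\Sigma(q)=\emptyset$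 if $q\notin\Sigma$. Forcing in $M_\Sigma$ is bi-relational forcing with respect to $\leq_\Sigma,R_\Sigma,V_\Sigma$. *)

Set Implicit Arguments.

Inductive form : Type :=
| Var : nat -> form
| Bot : form
| And : form -> form -> form
| Or : form -> form -> form
| Imp : form -> form -> form
| Delta : form -> form.

Fixpoint force (W : Type) (le R : W -> W -> Prop) (V : nat -> W -> Prop)
  (w : W) (phi : form) {struct phi} : Prop :=
  match phi with
  | Var q => V q w
  | Bot => False
  | And a b => force le R V w a /\ force le R V w b
  | Or a b => force le R V w a \/ force le R V w b
  | Imp a b => forall v, le w v -> ~ force le R V v a \/ force le R V v b
  | Delta a => forall v, R w v -> force le R V v a
  end.

Definition brIML1_model (W : Type) (le R : W -> W -> Prop) (V : nat -> W -> Prop) : Prop :=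
  inhabited W /\
  (forall w, le w w) /\
  (forall w v, le w v -> le v w -> w = v) /\
  (forall w v u, le w v -> le v u -> le w u) /\
  (forall w v, le w v -> R w v) /\
  (forall w v u, le w v -> R v u -> R w u) /\
  (forall q w v, V q w -> le w v -> V q v).

Fixpoint subformula (a g : form) : Prop :=
  a = g \/
  match g with
  | Var _ | Bot => False
  | And b c | Or b c | Imp b c => subformula a b \/ subformula a c
  | Delta b => subformula a b
  end.

Section Filtration.
Variables (W : Type) (le R : W -> W -> Prop) (V : nat -> W -> Prop) (Sigma : form -> Prop).

Let frc := force le R V.

Definition sim (w v : W) : Prop := forall a, Sigma a -> (frc w a <-> frc v a).

Definition cls (w : W) : W -> Prop := fun v => sim w v.

Definition WS : Type := { C : W -> Prop | exists w, C = cls w }.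

Definition leS (C D : WS) : Prop :=
  exists w v, proj1_sig C = cls w /\ proj1_sig D = cls v /\
    (forall a, Sigma a -> frc w a -> frc v a).

Definition RS (C D : WS) : Prop :=
  exists w v, proj1_sig C = cls w /\ proj1_sig D = cls v /\
    (forall b, Sigma (Delta b) -> frc w (Delta b) -> frc v b).

Definition VS (q : nat) (C : WS) : Prop :=
  Sigma (Var q) /\ exists w, V q w /\ proj1_sig C = cls w.

Definition clsS (w : W) : WS := exist _ (cls w) (ex_intro _ w eq_refl).

Definition forceS (C : WS) (a : form) : Prop := force leS RS VS C a.

End Filtration.
Arguments forceS : clear implicits.
Arguments clsS : clear implicits.

(** Induction on the formula, for any set [Sigma] closed under subformulas,
    proving the equivalence at every representative of a class.  The only
    model property used is persistence of forcing along [le], which makes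
    [le w v] imply [[w] <=_Sigma [v]]; conversely, a [<=_Sigma]- or
    [R_Sigma]-step between classes transfers, by its very definition, the
    forcing of an implication or a [Delta]-formula of [Sigma] to the
    representative of the target class. *)

From Stdlib Require Import Setoid.

Lemma subformula_refl (a : form) : subformula a a.
Proof. destruct a; left; reflexivity. Qed.

Lemma subformula_trans (a b c : form) :
  subformula a b -> subformula b c -> subformula a c.
Proof.
  intros Hab. induction c; intros [-> | Hbc]; try exact Hab; simpl in Hbc |- *;
    right; try contradiction; try (destruct Hbc; auto); auto.
Qed.

Definition subformula_closed (Sigma : form -> Prop) : Prop :=
  forall a b, subformula a b -> Sigma b -> Sigma a.

Lemma subformulas_closed (gamma : form) :
  subformula_closed (fun b => subformula b gamma).
Proof. intros a b Hab Hb. exact (subformula_trans a b gamma Hab Hb). Qed.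

Lemma force_persistent {W : Type} {le R : W -> W -> Prop} {V : nat -> W -> Prop} :
  brIML1_model le R V ->
  forall a w v, le w v -> force le R V w a -> force le R V v a.
Proof.
  intros (_ & _ & _ & le_trans & _ & le_R_comp & V_up).
  induction a; simpl; intros w v Hwv H; eauto.
  - destruct H; split; eauto.
  - destruct H; [left | right]; eauto.
Qed.

Section TruthLemma.

Context {W : Type} {le R : W -> W -> Prop} {V : nat -> W -> Prop}
  {Sigma : form -> Prop}.
Hypothesis model : brIML1_model le R V.
Hypothesis closed : subformula_closed Sigma.

Local Notation frc := (force le R V).
Local Notation cl := (cls le R V Sigma).
Local Notation clS w := (clsS W le R V Sigma w).

Lemma cls_eq_sim (w1 w2 : W) : cl w1 = cl w2 -> sim le R V Sigma w1 w2.
Proof.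
  intros E.
  assert (Hw2 : cl w2 w2) by (intros b _; split; auto).
  rewrite <- E in Hw2. exact Hw2.
Qed.

Lemma leS_of_le {C : WS le R V Sigma} {w v : W} :
  proj1_sig C = cl w -> le w v -> leS C (clS v).
Proof.
  intros EC Hwv. exists w, v. repeat split; [exact EC |].
  intros b _. exact (force_persistent model b w v Hwv).
Qed.

Lemma RS_of_R {C : WS le R V Sigma} {w v : W} :
  proj1_sig C = cl w -> R w v -> RS C (clS v).
Proof.
  intros EC Hwv. exists w, v. repeat split; [exact EC |].
  intros b _ Hb. exact (Hb v Hwv).
Qed.

Lemma filtration_truth (a : form) : Sigma a ->
  forall (C : WS le R V Sigma) (w : W), proj1_sig C = cl w ->
    (frc w a <-> forceS W le R V Sigma C a).
Proof.
  induction a as [q| |a1 IH1 a2 IH2|a1 IH1 a2 IH2|a1 IH1 a2 IH2|a IH];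
    intros Ha C w EC; unfold forceS; simpl.
  - split.
    + intros Hq. split; [exact Ha | exists w; auto].
    + intros (_ & w' & Hq & E). rewrite EC in E.
      exact (proj2 (cls_eq_sim w w' E _ Ha) Hq).
  - reflexivity.
  - pose proof (closed a1 (And a1 a2) (or_intror (or_introl (subformula_refl a1))) Ha) as Ha1.
    pose proof (closed a2 (And a1 a2) (or_intror (or_intror (subformula_refl a2))) Ha) as Ha2.
    rewrite (IH1 Ha1 C w EC), (IH2 Ha2 C w EC). reflexivity.
  - pose proof (closed a1 (Or a1 a2) (or_intror (or_introl (subformula_refl a1))) Ha) as Ha1.
    pose proof (closed a2 (Or a1 a2) (or_intror (or_intror (subformula_refl a2))) Ha) as Ha2.
    rewrite (IH1 Ha1 C w EC), (IH2 Ha2 C w EC). reflexivity.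
  - pose proof (closed a1 (Imp a1 a2) (or_intror (or_introl (subformula_refl a1))) Ha) as Ha1.
    pose proof (closed a2 (Imp a1 a2) (or_intror (or_intror (subformula_refl a2))) Ha) as Ha2.
    split.
    + intros Himp D (w' & v & E & ED & transfer).
      rewrite EC in E.
      assert (Hv : frc v (Imp a1 a2)).
      { apply transfer; [exact Ha |]. exact (proj1 (cls_eq_sim w w' E _ Ha) Himp). }
      destruct model as (_ & le_refl & _).
      destruct (Hv v (le_refl v)) as [Hn | Hp].
      * left. rewrite <- (IH1 Ha1 D v ED). exact Hn.
      * right. exact (proj1 (IH2 Ha2 D v ED) Hp).
    + intros Himp v Hwv.
      destruct (Himp _ (leS_of_le EC Hwv)) as [Hn | Hp].
      * left. rewrite (IH1 Ha1 (clS v) v eq_refl). exact Hn.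
      * right. exact (proj2 (IH2 Ha2 (clS v) v eq_refl) Hp).
  - pose proof (closed a (Delta a) (or_intror (subformula_refl a)) Ha) as Ha'.
    split.
    + intros Hbox D (w' & v & E & ED & transfer).
      rewrite EC in E.
      apply (IH Ha' D v ED), transfer; [exact Ha |].
      exact (proj1 (cls_eq_sim w w' E _ Ha) Hbox).
    + intros Hbox v Hwv.
      exact (proj2 (IH Ha' (clS v) v eq_refl) (Hbox _ (RS_of_R EC Hwv))).
Qed.

End TruthLemma.

Theorem theorem5p4 (W : Type) (le R : W -> W -> Prop) (V : nat -> W -> Prop)
  (gamma : form) :
  brIML1_model le R V ->
  (exists w, ~ force le R V w gamma) ->
  forall (w : W) (a : form), subformula a gamma ->
    (force le R V w a <->
     forceS W le R V (fun b => subformula b gamma)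
       (clsS W le R V (fun b => subformula b gamma) w) a).
Proof.
  intros model _ w a Ha.
  exact (filtration_truth model (subformulas_closed gamma) a Ha
           (clsS _ _ _ _ _ w) w eq_refl).
Qed.
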